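(* Let $a>1$ and consider on $M_h$ with $2h=1$ the reduced oblate integrable system $(\ell_{34},G_{obl})$, where $G_{obl}=a\ell_{12}^2+\ell_{13}^2+\ell_{14}^2$. The critical values of the momentum map $(\ell_{34},G_{obl}):M_h\to\mathbb R^2$ are (the parts lying in the image of the momentum map of) the curves $\mathcal O_1: G_{obl}=(\sqrt a-\sqrt{a-1}\,|\ell_{34}|)^2$, $\mathcal O_2: G_{obl}=1-\ell_{34}^2$, and $\mathcal O_3: G_{obl}=0$.
   Context: $\mathbf L=(\ell_{12},\ell_{13},\ell_{14},\ell_{23},\ell_{24},\ell_{34})\in\mathbb R^6\cong\mathfrak{so}(4)^*$ with the Lie–Poisson bracket of $\mathfrak{so}(4)$ (extending $\ell_{ji}=-\ell_{ij}$: $\{\ell_{ij},\ell_{jk}\}=-\ell_{ik}$ for distinct $i,j,k$, and $\{\ell_{ij},\ell_{kl}\}=0$ when $\{i,j\}\cap\{k,l\}=\emptyset$). $M_h=\{\mathbf L:\sum_{i<j}\ell_{ij}^2=2h,\ \ell_{12}\ell_{34}-\ell_{13}\ell_{24}+\ell_{14}\ell_{23}=0\}\cong S^2\times S^2$ is a symplectic leaf. This system arises from separating the geodesic flow on $S^3$ in oblate coordinates (ellipsoidal parameters $(0,1,a,a)$). *)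

From Stdlib Require Import Reals.
From Coquelicot Require Import Coquelicot.
Open Scope R_scope.

(* A point L = (l12,l13,l14,l23,l24,l34) of R^6 ~ so(4)^*. *)
Record L6 := mkL { l12 : R; l13 : R; l14 : R; l23 : R; l24 : R; l34 : R }.

Definition shift (L V : L6) (t : R) : L6 :=
  mkL (l12 L + t * l12 V) (l13 L + t * l13 V) (l14 L + t * l14 V)
      (l23 L + t * l23 V) (l24 L + t * l24 V) (l34 L + t * l34 V).

Definition dir (f : L6 -> R) (L V : L6) : R := Derive (fun t => f (shift L V t)) 0.

(* Casimirs of so(4). *)
Definition C1 (L : L6) : R :=
  l12 L ^ 2 + l13 L ^ 2 + l14 L ^ 2 + l23 L ^ 2 + l24 L ^ 2 + l34 L ^ 2.
Definition C2 (L : L6) : R :=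
  l12 L * l34 L - l13 L * l24 L + l14 L * l23 L.

Definition Mh (h : R) (L : L6) : Prop := C1 L = 2 * h /\ C2 L = 0.

Definition G_obl (a : R) (L : L6) : R := a * l12 L ^ 2 + l13 L ^ 2 + l14 L ^ 2.

(* Tangent vectors to the (regular) level set M_h at L: kernel of dC1, dC2. *)
Definition tangent (L V : L6) : Prop := dir C1 L V = 0 /\ dir C2 L V = 0.

(* L is a critical point of the momentum map (l34, G_obl) restricted to M_h:
   the differential restricted to T_L M_h has rank < 2, i.e. some nontrivial
   linear combination of d l34 and d G_obl vanishes on T_L M_h. *)
Definition crit_point (a h : R) (L : L6) : Prop :=
  Mh h L /\
  exists al be : R, (al <> 0 \/ be <> 0) /\
    forall V : L6, tangent L V -> al * dir l34 L V + be * dir (G_obl a) L V = 0.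

Definition crit_value (a h x y : R) : Prop :=
  exists L, crit_point a h L /\ x = l34 L /\ y = G_obl a L.
Definition in_image (a h x y : R) : Prop :=
  exists L, Mh h L /\ x = l34 L /\ y = G_obl a L.

From Pilot Require Import Defs.
From Stdlib Require Import Reals Lra Psatz.
From Coquelicot Require Import Coquelicot.
Open Scope R_scope.

(* The tangent space of M_h at L is the orthogonal complement of L and of its
   Hodge dual *L, two orthogonal vectors of the same norm.  So L is critical iff
   some covector al dl34 + be dG_obl lies in span(L, *L): a linear system in the
   six components with two multipliers.  It splits into two 2x2 blocks; when
   their common determinant is nonzero, l13 = l14 = l23 = l24 = 0 and L lies
   over O3 or over the point (0, a) of O1.  Otherwise either the Hodge
   multiplier vanishes, giving O2 or O3, or eliminating with the Casimirs gives
   a G_obl = m^2 and (a - m)^2 = a (a - 1) l34^2 for the remaining multiplier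
   m <= a, which is O1.  Conversely each curve is reached by an explicit
   solution of the system; where a l34^2 >= a - 1 the curve O1 lies above O2,
   which bounds the image there. *)

Definition dot (X Y : L6) : R :=
  l12 X * l12 Y + l13 X * l13 Y + l14 X * l14 Y
  + l23 X * l23 Y + l24 X * l24 Y + l34 X * l34 Y.

Definition hodge (L : L6) : L6 :=
  mkL (l34 L) (- l24 L) (l23 L) (l14 L) (- l13 L) (l12 L).

Definition lin2 (c : R) (X : L6) (d : R) (Y : L6) : L6 :=
  mkL (c * l12 X + d * l12 Y) (c * l13 X + d * l13 Y) (c * l14 X + d * l14 Y)
      (c * l23 X + d * l23 Y) (c * l24 X + d * l24 Y) (c * l34 X + d * l34 Y).

Definition e34 : L6 := mkL 0 0 0 0 0 1.

Definition grad_G_obl (a : R) (L : L6) : L6 :=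
  mkL (2 * a * l12 L) (2 * l13 L) (2 * l14 L) 0 0 0.

Lemma dot_comm X Y : dot X Y = dot Y X.
Proof. unfold dot; ring. Qed.

Lemma dot_lin2_r Z c X d Y : dot Z (lin2 c X d Y) = c * dot Z X + d * dot Z Y.
Proof. unfold dot, lin2; simpl; ring. Qed.

Lemma dot_self L : dot L L = Defs.C1 L.
Proof. unfold dot, Defs.C1; ring. Qed.

Lemma dot_hodge_hodge L : dot (hodge L) (hodge L) = Defs.C1 L.
Proof. unfold dot, hodge, Defs.C1; simpl; ring. Qed.

Lemma dot_hodge L : dot L (hodge L) = 2 * Defs.C2 L.
Proof. unfold dot, hodge, Defs.C2; simpl; ring. Qed.

Lemma dot_self_eq0 X : dot X X = 0 -> X = mkL 0 0 0 0 0 0.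
Proof.
  destruct X as [p q r s t u]; unfold dot; simpl; intro H.
  assert (p = 0) by nra; assert (q = 0) by nra; assert (r = 0) by nra.
  assert (s = 0) by nra; assert (t = 0) by nra; assert (u = 0) by nra.
  subst; reflexivity.
Qed.

Lemma orthogonal_span X Y W :
  dot X Y = 0 -> dot X X <> 0 -> dot Y Y <> 0 ->
  (forall V, dot X V = 0 -> dot Y V = 0 -> dot W V = 0) ->
  W = lin2 (dot W X / dot X X) X (dot W Y / dot Y Y) Y.
Proof.
  intros HXY HX HY HW.
  set (P := lin2 (dot W X / dot X X) X (dot W Y / dot Y Y) Y).
  set (V := lin2 1 W (-1) P).
  assert (HXV : dot X V = 0).
  { unfold V, P; rewrite !dot_lin2_r, (dot_comm X W), HXY; field; auto. }
  assert (HYV : dot Y V = 0).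
  { unfold V, P; rewrite !dot_lin2_r, (dot_comm Y W), (dot_comm Y X), HXY; field; auto. }
  assert (HVV : dot V V = 0).
  { unfold V at 2, P; rewrite !dot_lin2_r, (dot_comm V W), (dot_comm V X), (dot_comm V Y).
    rewrite HW, HXV, HYV by assumption; ring. }
  apply dot_self_eq0 in HVV; clearbody P; unfold V, lin2 in HVV.
  destruct W, P; simpl in HVV; injection HVV; intros; f_equal; lra.
Qed.

Lemma dir_C1 L V : dir Defs.C1 L V = 2 * dot L V.
Proof.
  unfold dir, Defs.C1; apply is_derive_unique.
  destruct L, V; unfold shift, dot; simpl; auto_derive; [easy | ring].
Qed.

Lemma dir_C2 L V : dir Defs.C2 L V = dot (hodge L) V.
Proof.
  unfold dir, Defs.C2; apply is_derive_unique.
  destruct L, V; unfold shift, dot; simpl; auto_derive; [easy | ring].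
Qed.

Lemma dir_l34 L V : dir l34 L V = dot e34 V.
Proof.
  unfold dir; apply is_derive_unique.
  destruct L, V; unfold shift, dot; simpl; auto_derive; [easy | ring].
Qed.

Lemma dir_G_obl a L V : dir (G_obl a) L V = dot (grad_G_obl a L) V.
Proof.
  unfold dir, G_obl; apply is_derive_unique.
  destruct L, V; unfold shift, dot; simpl; auto_derive; [easy | ring].
Qed.

Lemma tangent_iff L V : tangent L V <-> dot L V = 0 /\ dot (hodge L) V = 0.
Proof. unfold tangent; rewrite dir_C1, dir_C2; lra. Qed.

Lemma dir_covector a al be L V :
  al * dir l34 L V + be * dir (G_obl a) L V = dot (lin2 al e34 be (grad_G_obl a L)) V.
Proof.
  rewrite dir_l34, dir_G_obl, (dot_comm (lin2 _ _ _ _)), dot_lin2_r, !(dot_comm V).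
  reflexivity.
Qed.

Lemma crit_point_of_span a h L al be c d :
  Mh h L -> (al <> 0 \/ be <> 0) ->
  lin2 al e34 be (grad_G_obl a L) = lin2 c L d (hodge L) -> crit_point a h L.
Proof.
  intros HM Hne HW; split; [exact HM |].
  exists al, be; split; [exact Hne |].
  intros V HV; apply tangent_iff in HV as [HL HhL].
  rewrite dir_covector, HW, (dot_comm (lin2 _ _ _ _)), dot_lin2_r, !(dot_comm V), HL, HhL.
  ring.
Qed.

Lemma span_of_crit_covector a h L al be :
  0 < h -> Mh h L ->
  (forall V, tangent L V -> al * dir l34 L V + be * dir (G_obl a) L V = 0) ->
  exists c d, lin2 al e34 be (grad_G_obl a L) = lin2 c L d (hodge L).
Proof.
  intros Hh [HC1 HC2] HW.
  eexists; eexists; apply orthogonal_span.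
  - rewrite dot_hodge, HC2; ring.
  - rewrite dot_self, HC1; lra.
  - rewrite dot_hodge_hodge, HC1; lra.
  - intros V HL HhL; rewrite <- dir_covector; apply HW, tangent_iff; auto.
Qed.

(* The components of [al dl34 + (1/2) dG_obl = m L + nu (hodge L)] other than the
   [l34] one, which only determines [al]. *)
Definition lagrange_G (a m nu : R) (L : L6) : Prop :=
  (a - m) * l12 L = nu * l34 L /\ (1 - m) * l13 L = - nu * l24 L /\
  (1 - m) * l14 L = nu * l23 L /\ m * l23 L = - nu * l14 L /\ m * l24 L = nu * l13 L.

(* The components of [dl34 = c L + d (hodge L)]. *)
Definition lagrange_l34 (c d : R) (L : L6) : Prop :=
  c * l12 L + d * l34 L = 0 /\ c * l13 L - d * l24 L = 0 /\ c * l14 L + d * l23 L = 0 /\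
  c * l23 L + d * l14 L = 0 /\ c * l24 L - d * l13 L = 0 /\ c * l34 L + d * l12 L = 1.

Lemma crit_point_of_lagrange_G a h L m nu :
  Mh h L -> lagrange_G a m nu L -> crit_point a h L.
Proof.
  intros HM HG; apply (crit_point_of_span a h L (m * l34 L + nu * l12 L) (1/2) m nu HM);
    [right; lra |].
  destruct L; unfold lagrange_G, lin2, grad_G_obl, hodge, e34 in *; simpl in *.
  f_equal; lra.
Qed.

Lemma lagrange_of_crit_point a h L :
  0 < h -> crit_point a h L ->
  (exists m nu, lagrange_G a m nu L) \/ (exists c d, lagrange_l34 c d L).
Proof.
  intros Hh [HM [al [be [Hne HW]]]].
  destruct (Req_dec be 0) as [Hbe | Hbe].
  - right.
    destruct (span_of_crit_covector a h L 1 0 Hh HM) as [c [d Hcd]].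
    { intros V HV; specialize (HW V HV); subst be.
      assert (al <> 0) by (destruct Hne; lra).
      apply (Rmult_eq_reg_l al); [lra | auto]. }
    exists c, d; destruct L; unfold lagrange_l34, lin2, grad_G_obl, hodge, e34 in *; simpl in *.
    injection Hcd; intros; repeat split; lra.
  - left.
    destruct (span_of_crit_covector a h L (al / (2 * be)) (1/2) Hh HM) as [m [nu Hmnu]].
    { intros V HV; specialize (HW V HV).
      apply (Rmult_eq_reg_l (2 * be)); [| lra].
      rewrite Rmult_0_r, <- HW; field; auto. }
    exists m, nu; destruct L; unfold lagrange_G, lin2, grad_G_obl, hodge, e34 in *; simpl in *.
    injection Hmnu; intros; repeat split; lra.
Qed.

Definition on_bifurcation_curves (a x y : R) : Prop :=
  y = (sqrt a - sqrt (a - 1) * Rabs x) ^ 2 \/ y = 1 - x ^ 2 \/ y = 0.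

Lemma linsys2_eq0 al be ga de x y :
  al * de - be * ga <> 0 -> al * x + be * y = 0 -> ga * x + de * y = 0 -> x = 0 /\ y = 0.
Proof.
  intros Hdet H1 H2; split.
  - apply (Rmult_eq_reg_l (al * de - be * ga)); [| exact Hdet].
    rewrite Rmult_0_r; replace 0 with (de * (al * x + be * y) - be * (ga * x + de * y)) by
      (rewrite H1, H2; ring); ring.
  - apply (Rmult_eq_reg_l (al * de - be * ga)); [| exact Hdet].
    rewrite Rmult_0_r; replace 0 with (al * (ga * x + de * y) - ga * (al * x + be * y)) by
      (rewrite H1, H2; ring); ring.
Qed.

Lemma on_curves_of_l13_l14_l23_l24_eq0 a L :
  0 <= a -> Mh (1/2) L -> l13 L = 0 -> l14 L = 0 -> l23 L = 0 -> l24 L = 0 ->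
  on_bifurcation_curves a (l34 L) (G_obl a L).
Proof.
  destruct L as [p q r s t u]; unfold Mh, Defs.C1, Defs.C2, G_obl, on_bifurcation_curves;
    cbn [l12 l13 l14 l23 l24 l34].
  intros Ha [HC1 HC2] -> -> -> ->.
  assert (Hpu : p * u = 0) by lra.
  destruct (Rmult_integral _ _ Hpu) as [-> | ->].
  - right; right; ring.
  - left; rewrite Rabs_R0, Rmult_0_r, Rminus_0_r, pow2_sqrt by assumption; nra.
Qed.

Lemma on_curves_of_lagrange_l34 a c d L :
  0 <= a -> Mh (1/2) L -> lagrange_l34 c d L -> on_bifurcation_curves a (l34 L) (G_obl a L).
Proof.
  intros Ha HM (E12 & E13 & E14 & E23 & E24 & E34).
  (* The (l12, l34) block has right-hand side (0, 1), so it cannot be singular. *)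
  assert (Hdet : c * c - d * d <> 0).
  { intro Hdet.
    assert (Hc : c = 0) by nra.
    assert (Hd : d = 0) by nra.
    subst; lra. }
  destruct (linsys2_eq0 c (- d) (- d) c (l13 L) (l24 L)) as [H13 H24]; [lra | lra | lra |].
  destruct (linsys2_eq0 c d d c (l14 L) (l23 L)) as [H14 H23]; [lra | lra | lra |].
  apply on_curves_of_l13_l14_l23_l24_eq0; assumption.
Qed.

Lemma O1_relations a m nu L :
  1 < a -> Mh (1/2) L -> lagrange_G a m nu L -> nu ^ 2 = m * (m - 1) -> nu <> 0 ->
  a * G_obl a L = m ^ 2 /\ (a - m) ^ 2 = a * (a - 1) * l34 L ^ 2 /\ m <= a.
Proof.
  destruct L as [p q r s t u]; unfold Mh, Defs.C1, Defs.C2, lagrange_G, G_obl;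
    cbn [l12 l13 l14 l23 l24 l34].
  intros Ha [HC1 HC2] (E12 & _ & _ & E23 & E24) Hnu Hnu0.
  set (Q := q ^ 2 + r ^ 2).
  assert (Hmm : m * (m - 1) > 0) by (rewrite <- Hnu; nra).
  assert (Hm0 : m <> 0) by (intros ->; lra).
  assert (HpuQ : m * (p * u) = nu * Q).
  { unfold Q; replace (m * (p * u)) with (m * (p * u - q * t + r * s) + q * (m * t) - r * (m * s))
      by ring; rewrite HC2, E23, E24; ring. }
  assert (HpQ : (a - m) * p ^ 2 = (m - 1) * Q).
  { apply (Rmult_eq_reg_l m); [| exact Hm0].
    replace (m * ((a - m) * p ^ 2)) with (p * m * ((a - m) * p)) by ring.
    rewrite E12; replace (p * m * (nu * u)) with (nu * (m * (p * u))) by ring.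
    rewrite HpuQ; replace (nu * (nu * Q)) with (nu ^ 2 * Q) by ring; rewrite Hnu; ring. }
  assert (HsQ : m * (s ^ 2 + t ^ 2) = (m - 1) * Q).
  { apply (Rmult_eq_reg_l m); [| exact Hm0].
    replace (m * (m * (s ^ 2 + t ^ 2))) with ((m * s) ^ 2 + (m * t) ^ 2) by ring.
    rewrite E23, E24; unfold Q; nra. }
  assert (Hu : m * (m - 1) * u ^ 2 = (a - m) ^ 2 * p ^ 2).
  { rewrite <- Hnu; replace (nu ^ 2 * u ^ 2) with ((nu * u) ^ 2) by ring; rewrite <- E12; ring. }
  assert (Hp : a * (a - 1) * p ^ 2 = m * (m - 1)).
  { assert (H1 : p ^ 2 + Q + (s ^ 2 + t ^ 2) + u ^ 2 = 1) by (unfold Q; lra). nra. }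
  assert (Hp2 : p ^ 2 > 0).
  { apply (Rmult_lt_reg_l (a * (a - 1))); [nra | rewrite Hp; lra]. }
  assert (HQ : 0 <= Q) by (unfold Q; nra).
  assert (Hm1 : 1 < m) by nra.
  repeat split.
  - apply (Rmult_eq_reg_l (m - 1)); [| lra].
    replace ((m - 1) * (a * (a * p ^ 2 + q ^ 2 + r ^ 2)))
      with (a * ((m - 1) * a * p ^ 2 + (m - 1) * Q)) by (unfold Q; ring).
    rewrite <- HpQ; replace (a * ((m - 1) * a * p ^ 2 + (a - m) * p ^ 2))
      with (m * (a * (a - 1) * p ^ 2)) by ring.
    rewrite Hp; ring.
  - apply (Rmult_eq_reg_l (m * (m - 1))); [| lra].
    replace (m * (m - 1) * (a * (a - 1) * u ^ 2)) with (a * (a - 1) * (m * (m - 1) * u ^ 2))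
      by ring.
    rewrite Hu, <- Hp; ring.
  - nra.
Qed.

Lemma O1_multiplier a m x :
  1 < a -> m <= a -> (a - m) ^ 2 = a * (a - 1) * x ^ 2 ->
  m = sqrt a * (sqrt a - sqrt (a - 1) * Rabs x).
Proof.
  intros Ha Hm Hx.
  assert (Hk : 0 <= sqrt a * sqrt (a - 1) * Rabs x)
    by (apply Rmult_le_pos; [apply Rmult_le_pos; apply sqrt_pos | apply Rabs_pos]).
  assert (Hk2 : (sqrt a * sqrt (a - 1) * Rabs x) ^ 2 = (a - m) ^ 2).
  { rewrite !Rpow_mult_distr, pow2_abs, !pow2_sqrt by lra; lra. }
  assert (Hsa : sqrt a * sqrt a = a) by (apply sqrt_sqrt; lra).
  nra.
Qed.

Lemma on_curves_of_lagrange_G a m nu L :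
  1 < a -> Mh (1/2) L -> lagrange_G a m nu L ->
  on_bifurcation_curves a (l34 L) (G_obl a L).
Proof.
  intros Ha HM HG.
  (* the common determinant of the (l13, l24) and (l14, l23) blocks *)
  destruct (Req_dec (m * (1 - m) + nu * nu) 0) as [Hdet | Hdet].
  - destruct (Req_dec nu 0) as [-> | Hnu].
    + destruct HM as [HC1 HC2]; destruct HG as (E12 & E13 & E14 & E23 & E24).
      destruct L as [p q r s t u]; unfold Defs.C1, Defs.C2, G_obl, on_bifurcation_curves in *;
        cbn [l12 l13 l14 l23 l24 l34] in *.
      assert (Hm : m = 0 \/ m = 1) by (destruct (Rmult_integral m (1 - m)); lra).
      destruct Hm as [-> | ->].
      * right; right.
        assert (q = 0) by lra; assert (r = 0) by lra; assert (p = 0) by nra.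
        subst; ring.
      * right; left.
        assert (s = 0) by lra; assert (t = 0) by lra; assert (p = 0) by nra.
        subst; lra.
    + destruct (O1_relations a m nu L Ha HM HG) as (HGm & Hum & Hma); [nra | exact Hnu |].
      left; apply (Rmult_eq_reg_l a); [| lra].
      rewrite HGm, (O1_multiplier a m (l34 L)) by assumption.
      rewrite Rpow_mult_distr, pow2_sqrt by lra; reflexivity.
  - destruct HG as (E12 & E13 & E14 & E23 & E24).
    destruct (linsys2_eq0 (1 - m) nu (- nu) m (l13 L) (l24 L)) as [H13 H24]; [lra | lra | lra |].
    destruct (linsys2_eq0 (1 - m) (- nu) nu m (l14 L) (l23 L)) as [H14 H23]; [lra | lra | lra |].
    apply on_curves_of_l13_l14_l23_l24_eq0; [lra | assumption ..].
Qed.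

Lemma G_obl_le_O2 a L :
  1 < a -> Mh (1/2) L -> a - 1 <= a * l34 L ^ 2 -> G_obl a L <= 1 - l34 L ^ 2.
Proof.
  destruct L as [p q r s t u]; unfold Mh, Defs.C1, Defs.C2, G_obl; cbn [l12 l13 l14 l23 l24 l34].
  intros Ha [HC1 HC2] Hu.
  assert (HCS : p ^ 2 * u ^ 2 <= (q ^ 2 + r ^ 2) * (s ^ 2 + t ^ 2)).
  { replace (p ^ 2 * u ^ 2) with ((q * t - r * s) ^ 2)
      by (replace (q * t - r * s) with (p * u) by lra; ring).
    replace ((q ^ 2 + r ^ 2) * (s ^ 2 + t ^ 2))
      with ((q * t - r * s) ^ 2 + (q * s + r * t) ^ 2) by ring.
    pose proof (pow2_ge_0 (q * s + r * t)); lra. }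
  destruct (Rle_or_lt (a * p ^ 2 + q ^ 2 + r ^ 2) (1 - u ^ 2)) as [| Hgt]; [assumption | exfalso].
  assert (Hp : 0 < p ^ 2) by nra.
  assert (HuQ : u ^ 2 <= (a - 1) * (q ^ 2 + r ^ 2)).
  { apply (Rmult_le_reg_l (p ^ 2)); [exact Hp | nra]. }
  nra.
Qed.

Lemma O2_le_O1 a x : 1 <= a -> 1 - x ^ 2 <= (sqrt a - sqrt (a - 1) * Rabs x) ^ 2.
Proof.
  intro Ha.
  replace ((sqrt a - sqrt (a - 1) * Rabs x) ^ 2) with
    ((sqrt a * Rabs x - sqrt (a - 1)) ^ 2 + (sqrt a ^ 2 - sqrt (a - 1) ^ 2) * (1 - Rabs x ^ 2))
    by ring.
  rewrite !pow2_sqrt, pow2_abs by lra.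
  pose proof (pow2_ge_0 (sqrt a * Rabs x - sqrt (a - 1))); lra.
Qed.

Lemma crit_point_of_G_obl_eq0 a h L : 0 < a -> Mh h L -> G_obl a L = 0 -> crit_point a h L.
Proof.
  intros Ha HM HG; apply (crit_point_of_lagrange_G a h L 0 0 HM).
  destruct L as [p q r s t u]; unfold G_obl, lagrange_G in *; cbn [l12 l13 l14 l23 l24 l34] in *.
  pose proof (pow2_ge_0 q); pose proof (pow2_ge_0 r).
  assert (0 <= a * p ^ 2) by (apply Rmult_le_pos; [lra | apply pow2_ge_0]).
  assert (Hp : p ^ 2 = 0) by (apply (Rmult_eq_reg_l a); lra).
  assert (p = 0) by nra; assert (q = 0) by nra; assert (r = 0) by nra.
  subst; repeat split; ring.
Qed.

Lemma O2_crit_value a x : x ^ 2 <= 1 -> crit_value a (1/2) x (1 - x ^ 2).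
Proof.
  intro Hx; exists (mkL 0 (sqrt (1 - x ^ 2)) 0 0 0 x); split; [| split].
  - apply (crit_point_of_lagrange_G a (1/2) _ 1 0).
    + unfold Mh, Defs.C1, Defs.C2; cbn [l12 l13 l14 l23 l24 l34].
      rewrite pow2_sqrt by lra; split; [field | ring].
    + unfold lagrange_G; cbn [l12 l13 l14 l23 l24 l34]; repeat split; ring.
  - reflexivity.
  - unfold G_obl; cbn [l12 l13 l14 l23 l24 l34]; rewrite pow2_sqrt by lra; ring.
Qed.

Lemma signed_root w x :
  exists nu, nu ^ 2 = w ^ 2 /\ nu * x = w * Rabs x /\ nu * Rabs x = w * x.
Proof.
  destruct (Rle_or_lt 0 x) as [Hx | Hx].
  - exists w; rewrite Rabs_pos_eq by exact Hx; repeat split; ring.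
  - exists (- w); rewrite Rabs_left by exact Hx; repeat split; ring.
Qed.

(* The multiplier [m] is the one forced by [O1_multiplier]; the point is the solution
   of [lagrange_G a m nu] with [l14 = l23 = 0], normalized by the Casimirs. *)
Lemma O1_crit_value a x :
  1 < a -> a * x ^ 2 < a - 1 -> crit_value a (1/2) x ((sqrt a - sqrt (a - 1) * Rabs x) ^ 2).
Proof.
  intros Ha Hx.
  set (k := sqrt a * sqrt (a - 1)).
  set (m := sqrt a * (sqrt a - sqrt (a - 1) * Rabs x)).
  assert (Hk2 : k ^ 2 = a * (a - 1))
    by (unfold k; rewrite Rpow_mult_distr, !pow2_sqrt by lra; ring).
  assert (Hk : 0 < k) by (unfold k; apply Rmult_lt_0_compat; apply sqrt_lt_R0; lra).
  assert (Ham : a - m = k * Rabs x).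
  { unfold m, k; rewrite <- (sqrt_sqrt a) at 1 by lra; ring. }
  assert (Hkx : (k * Rabs x) ^ 2 = a * (a - 1) * x ^ 2)
    by (rewrite Rpow_mult_distr, Hk2, pow2_abs; ring).
  assert (Hm : 1 < m) by (pose proof (Rabs_pos x); nra).
  assert (Hma : 0 <= a - m) by (rewrite Ham; pose proof (Rabs_pos x); nra).
  assert (HGm : a * (sqrt a - sqrt (a - 1) * Rabs x) ^ 2 = m ^ 2)
    by (unfold m; rewrite Rpow_mult_distr, pow2_sqrt by lra; ring).
  clearbody k m.
  set (w := sqrt (m * (m - 1))); set (z := sqrt ((a - m) / m)).
  assert (Hw : w ^ 2 = m * (m - 1)) by (apply pow2_sqrt; nra).
  assert (Hz : m * z ^ 2 = a - m)
    by (unfold z; rewrite pow2_sqrt; [field | apply Rdiv_le_0_compat]; lra).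
  clearbody w z.
  destruct (signed_root w x) as (nu & Hnu & Hnux & Hnuax).
  assert (Hkx2 : k ^ 2 * x ^ 2 = (a - m) ^ 2)
    by (rewrite Ham, Rpow_mult_distr, pow2_abs; ring).
  assert (Hnuz : nu ^ 2 * z ^ 2 = (m - 1) * (a - m)) by (rewrite Hnu, Hw, <- Hz; ring).
  exists (mkL (w / k) (m * z / k) 0 0 (nu * z / k) x); split; [| split].
  - apply (crit_point_of_lagrange_G a (1/2) _ m nu).
    + unfold Mh, Defs.C1, Defs.C2; cbn [l12 l13 l14 l23 l24 l34]; split.
      * replace ((w / k) ^ 2 + (m * z / k) ^ 2 + 0 ^ 2 + 0 ^ 2 + (nu * z / k) ^ 2 + x ^ 2)
          with ((w ^ 2 + m * (m * z ^ 2) + nu ^ 2 * z ^ 2 + k ^ 2 * x ^ 2) / k ^ 2)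
          by (field; lra).
        rewrite Hw, Hz, Hnuz, Hkx2, Hk2; field; nra.
      * replace (w / k * x - m * z / k * (nu * z / k) + 0 * 0)
          with ((w * x * k - nu * (m * z ^ 2)) / k ^ 2) by (field; lra).
        rewrite Hz, Ham, (Rmult_comm k), <- Rmult_assoc, Hnuax; unfold Rdiv; ring.
    + unfold lagrange_G; cbn [l12 l13 l14 l23 l24 l34]; repeat split.
      * rewrite Ham, Hnux; field; lra.
      * replace (- nu * (nu * z / k)) with (- (nu ^ 2) * z / k) by (field; lra).
        rewrite Hnu, Hw; field; lra.
      * ring.
      * ring.
      * field; lra.
  - reflexivity.
  - cbn [l34]; unfold G_obl; cbn [l12 l13 l14].
    apply (Rmult_eq_reg_l a); [| lra].
    rewrite HGm.
    replace (a * (a * (w / k) ^ 2 + (m * z / k) ^ 2 + 0 ^ 2))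
      with ((a * a * w ^ 2 + a * m * (m * z ^ 2)) / k ^ 2) by (field; lra).
    rewrite Hw, Hz, Hk2; field; nra.
Qed.

Lemma on_curves_of_crit_point a L :
  1 < a -> crit_point a (1/2) L -> on_bifurcation_curves a (l34 L) (G_obl a L).
Proof.
  intros Ha HL.
  destruct (lagrange_of_crit_point a (1/2) L) as [[m [nu HG]] | [c [d Hl34]]];
    [lra | exact HL | |].
  - exact (on_curves_of_lagrange_G a m nu L Ha (proj1 HL) HG).
  - apply (on_curves_of_lagrange_l34 a c d L); [lra | exact (proj1 HL) | exact Hl34].
Qed.

Lemma l34_sq_le_1 L : Mh (1/2) L -> l34 L ^ 2 <= 1.
Proof.
  destruct L as [p q r s t u]; unfold Mh, Defs.C1; cbn [l12 l13 l14 l23 l24 l34]; intros [HC1 _].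
  pose proof (pow2_ge_0 p); pose proof (pow2_ge_0 q); pose proof (pow2_ge_0 r).
  pose proof (pow2_ge_0 s); pose proof (pow2_ge_0 t); lra.
Qed.

(* Where [a l34^2 >= a - 1], the image lies below O2 and O2 below O1, so the points
   of O1 in the image lie on O2. *)
Lemma crit_value_of_image_on_curves a x y :
  1 < a -> in_image a (1/2) x y -> on_bifurcation_curves a x y -> crit_value a (1/2) x y.
Proof.
  intros Ha [L [HM [-> ->]]] [HO1 | [HO2 | HO3]].
  - destruct (Rlt_or_le (a * l34 L ^ 2) (a - 1)) as [Hin | Hout].
    + rewrite HO1; apply O1_crit_value; assumption.
    + assert (HG : G_obl a L = 1 - l34 L ^ 2).
      { pose proof (G_obl_le_O2 a L Ha HM Hout); pose proof (O2_le_O1 a (l34 L)); lra. }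
      rewrite HG; apply O2_crit_value, l34_sq_le_1, HM.
  - rewrite HO2; apply O2_crit_value, l34_sq_le_1, HM.
  - exists L; split; [apply crit_point_of_G_obl_eq0 | split]; auto; lra.
Qed.

Theorem proposition5 (a : R) (ha : 1 < a) (x y : R) :
  crit_value a (1/2) x y <->
  (in_image a (1/2) x y /\
   (y = (sqrt a - sqrt (a - 1) * Rabs x) ^ 2 \/ y = 1 - x ^ 2 \/ y = 0)).
Proof.
  split.
  - intros [L [HL [-> ->]]]; split.
    + exists L; split; [exact (proj1 HL) | split; reflexivity].
    + exact (on_curves_of_crit_point a L ha HL).
  - intros [Him Hcurves]; exact (crit_value_of_image_on_curves a x y ha Him Hcurves).
Qed.
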